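(* Let $F$ be a non-empty union-closed family and $F_c\subseteq F$. Let $S=\bigcup F_c$ and $K=\bigcup F\setminus\bigcup F_c$. Let $w$ be a function from elements to $\mathbb{N}$ with $w(a)>0$ for some $a\in\bigcup F$ and $w(x)=0$ for all $x\in K$. If $\mathrm{fs}(F',w,\bigcup F_c)\ge 0$ for every $F'\in\mathrm{uce}(F_c)$, then $F$ is Frankl's.
   Context: All sets and families are finite. A family $F$ is union closed if $A\cup B\in F$ for all $A,B\in F$; it is union closed for $F_c$ if it is union closed and $A\cup B\in F$ for all $A\in F$, $B\in F_c$. $\mathrm{uce}(F_c)=\{F' : F'\subseteq\mathcal{P}(\bigcup F_c),\ F' \text{ union closed for } F_c\}$. $F$ is Frankl's if there is $a \in \bigcup F$ with $2\cdot|\{A\in F: a\in A\}| \ge |F|$. $\mathrm{sw}(w,A)=\sum_{a\in A}w(a)$; $\mathrm{ss}(A,w,X)=2\,\mathrm{sw}(w,A)-\mathrm{sw}(w,X)\in\mathbb{Z}$; $\mathrm{fs}(F,w,X)=\sum_{A\in F}\mathrm{ss}(A,w,X)$. *)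

From mathcomp Require Import all_boot all_order all_algebra.
Set Implicit Arguments. Unset Strict Implicit. Unset Printing Implicit Defensive.
Import GRing.Theory Num.Theory.

Section Defs.
Variable T : finType.

Definition bigcupF (F : {set {set T}}) : {set T} := \bigcup_(A in F) A.

Definition union_closed (F : {set {set T}}) : Prop :=
  forall A B, A \in F -> B \in F -> A :|: B \in F.

Definition union_closed_for (F Fc : {set {set T}}) : Prop :=
  union_closed F /\ (forall A B, A \in F -> B \in Fc -> A :|: B \in F).

Definition in_uce (Fc F' : {set {set T}}) : Prop :=
  F' \subset powerset (bigcupF Fc) /\ union_closed_for F' Fc.

Definition frankl (F : {set {set T}}) : Prop :=
  exists2 a, a \in bigcupF F & #|F| <= 2 * #|[set A in F | a \in A]|.

Definition sw (w : T -> nat) (A : {set T}) : nat := \sum_(a in A) w a.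

Definition ss (A : {set T}) (w : T -> nat) (X : {set T}) : int :=
  (2 * sw w A)%:Z - (sw w X)%:Z.

Definition fs (F : {set {set T}}) (w : T -> nat) (X : {set T}) : int :=
  \sum_(A in F) ss A w X.

End Defs.

From mathcomp Require Import all_boot all_order all_algebra.
Import GRing.Theory Num.Theory.

(* Write S = \bigcup Fc and group the members A of F by their
   part A \ S outside S.  For each such X (disjoint from S) the family
   slice F S X = { B \subseteq S | B \cup X \in F } is union closed for Fc,
   hence lies in uce(Fc) and has a nonnegative fs.  Since w vanishes on
   \bigcup F \ S, ss A w S only depends on A \cap S, so fs F w S is the sum
   of the fs of the slices and is therefore nonnegative.
   Unfolding, fs F w S >= 0 says |F| * w(S) <= 2 * sum_{A in F} w(A), and
   by double counting the right-hand side is sum_a w(a) * 2 * deg_F(a).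
   As S exhausts the w-weight of \bigcup F, a weighted pigeonhole argument
   yields an a in \bigcup F with 2 * deg_F(a) >= |F|, i.e. F is Frankl's. *)

Lemma weighted_pigeonhole {I : finType} {U : {pred I}} {w : I -> nat} (c : I -> nat) (n : nat) :
  (exists2 a, a \in U & 0 < w a) ->
  n * (\sum_(a in U) w a) <= \sum_(a in U) w a * c a ->
  exists2 a, a \in U & n <= c a.
Proof.
move=> [a0 a0U wa0] avg.
case: (boolP [exists a, (a \in U) && (n <= c a)]) =>
  [/existsP [a /andP [aU na]] | /existsPn small]; first by exists a.
have lt_c a : a \in U -> c a < n.
  by move=> aU; move: (small a); rewrite aU ltnNge.
exfalso; move: avg; apply/negP; rewrite -ltnNge big_distrr /=.
rewrite (bigD1 a0) // [X in _ < X](bigD1 a0) //= -addSn.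
apply: leq_add; first by rewrite mulnC ltn_pmul2r // lt_c.
by apply: leq_sum => a /andP [aU _]; rewrite mulnC leq_mul2r ltnW ?lt_c ?orbT.
Qed.

Section UnionClosedWeights.
Context {T : finType}.
Implicit Types (A S X : {set T}) (F Fc : {set {set T}}) (w : T -> nat).

Definition degree F (a : T) : nat := #|[set A in F | a \in A]|.

Lemma sub_bigcupF {F A} : A \in F -> A \subset bigcupF F.
Proof. exact: bigcup_sup. Qed.

Lemma bigcupFS {F Fc} : Fc \subset F -> bigcupF Fc \subset bigcupF F.
Proof.
move=> sFcF; apply/subsetP=> x /bigcupP [C CFc xC].
by apply/bigcupP; exists C => //; apply: (subsetP sFcF).
Qed.

Lemma sw_setI {w A S} :
  (forall x, x \in A :\: S -> w x = 0) -> sw w A = sw w (A :&: S).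
Proof.
move=> w0; rewrite /sw (bigID (mem S)) /= [X in _ + X]big1 ?addn0.
  by apply: eq_bigl => a; rewrite inE.
by move=> a /andP [aA aS]; apply: w0; rewrite inE aS.
Qed.

Lemma fsE F w X :
  fs F w X = ((2 * \sum_(A in F) sw w A)%:Z - (#|F| * sw w X)%:Z)%R.
Proof.
rewrite /fs /ss sumrB sumr_const big_distrr /= PoszM -[Posz #|F|]natz mulr_natl.
by rewrite (big_morph Posz PoszD (erefl _)).
Qed.

(* Double counting of the pairs (a, A) with a \in A \in F. *)
Lemma sum_sw_degree F w :
  \sum_(A in F) sw w A = \sum_(a in bigcupF F) w a * degree F a.
Proof.
rewrite /sw (exchange_big_dep (mem (bigcupF F))) /=; last first.
  by move=> A a AF aA; apply: (subsetP (sub_bigcupF AF)).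
apply: eq_bigr => a _; rewrite /degree mulnC -sum_nat_const.
by apply: eq_bigl => A; rewrite inE.
Qed.

Lemma frankl_of_weights {F w} :
  (exists2 a, a \in bigcupF F & 0 < w a) ->
  #|F| * sw w (bigcupF F) <= 2 * \sum_(A in F) sw w A ->
  frankl F.
Proof.
move=> wpos le_w; apply: (weighted_pigeonhole (fun a => 2 * degree F a) #|F| wpos).
by under [in X in _ <= X]eq_bigr do rewrite mulnCA; rewrite -big_distrr -sum_sw_degree.
Qed.

Definition slice F S X : {set {set T}} := [set B in powerset S | B :|: X \in F].

Lemma slice_in_uce F Fc X :
  union_closed F -> Fc \subset F -> in_uce Fc (slice F (bigcupF Fc) X).
Proof.
move=> ucF sFcF; split; first by apply/subsetP=> B; rewrite inE => /andP [].
split=> [B1 B2 | B C]; rewrite !inE ?powersetE.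
  move=> /andP [s1 f1] /andP [s2 f2]; rewrite subUset s1 s2.
  by rewrite -[X in _ :|: X]setUid setUACA ucF.
move=> /andP [s1 f1] CFc; rewrite subUset s1 bigcup_sup //=.
by rewrite setUAC ucF // (subsetP sFcF).
Qed.

Lemma fs_slices F S w :
  (forall x, x \in bigcupF F :\: S -> w x = 0) ->
  fs F w S = (\sum_(X | X :&: S == set0) fs (slice F S X) w S)%R.
Proof.
move=> w0.
have ss_setI A : A \in F -> ss A w S = ss (A :&: S) w S.
  move=> AF; rewrite /ss (@sw_setI w A S) // => x /setDP [xA xS].
  by apply: w0; rewrite inE xS (subsetP (sub_bigcupF AF)).
rewrite /fs (partition_big (fun A => A :\: S) (fun X => X :&: S == set0)); last first.
  by move=> A _; rewrite setDE -setIA (setIC (~: S)) setICr setI0.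
apply: eq_bigr => X /eqP XS.
(* The fibre over X is in bijection with slice F S X via B |-> B :|: X,
   whose inverse is A |-> A :&: S. *)
rewrite (reindex_onto (fun B => B :|: X) (fun A => A :&: S)); last first.
  by move=> A /andP [_ /eqP <-]; rewrite setID.
have XSd : X :\: S = X by apply/setDidPl; rewrite -setI_eq0 XS.
apply: eq_big => [B | B /andP [/andP [BF _] /eqP BS]]; last by rewrite ss_setI // BS.
rewrite inE powersetE setDUl setIUl XSd XS setU0.
case: (B :|: X \in F); rewrite /= ?andbF ?andbT //.
apply/idP/idP => [/andP [_ /eqP <-] | sBS]; first exact: subsetIr.
by rewrite (setIidPl sBS) eqxx andbT (eqP (_ : B :\: S == set0)) ?set0U ?setD_eq0.
Qed.

End UnionClosedWeights.

Theorem lemma4 (T : finType) (F Fc : {set {set T}}) (w : T -> nat) :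
  F != set0 ->
  union_closed F ->
  Fc \subset F ->
  (exists2 a : T, (a \in bigcupF F) & (0 < w a)%N) ->
  (forall x, x \in bigcupF F :\: bigcupF Fc -> w x = 0) ->
  (forall F', in_uce Fc F' -> (0 <= fs F' w (bigcupF Fc))%R) ->
  frankl F.
Proof.
move=> _ ucF sFcF wpos w0 uce_ge0.
have fsF_ge0 : (0 <= fs F w (bigcupF Fc))%R.
  rewrite fs_slices //; apply: sumr_ge0 => X _.
  by apply: uce_ge0; apply: slice_in_uce.
have weight_in_S : sw w (bigcupF F) = sw w (bigcupF Fc).
  by rewrite (sw_setI w0) (setIidPr (bigcupFS sFcF)).
apply: (frankl_of_weights wpos).
by move: fsF_ge0; rewrite fsE subr_ge0 lez_nat weight_in_S.
Qed.
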